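(* Let $k\leq n$ be positive integers. Suppose that for every $v\in\mathbb{R}^n$ with pairwise distinct coordinates not summing to $0$, and every hyperplane $H\subset\mathbb{R}^n$ through the origin, $|H\cap S_nv|\leq n!/k$. Then for every $m\geq n$, every $v\in\mathbb{R}^m$ with pairwise distinct coordinates not summing to $0$, and every hyperplane $H\subset\mathbb{R}^m$ through the origin, $|H\cap S_mv|\leq m!/k$. In particular, if $n\geq 3$ is odd and $\max_{v,H}|H\cap S_nv|=(n-1)!$ (maximum over $v\in\mathbb{R}^n$ with distinct coordinates not summing to $0$ and hyperplanes $H$ through the origin), then $\max_{v,H}|H\cap S_{n+1}v|=(n+1)(n-1)!$ (maximum over $v\in\mathbb{R}^{n+1}$ with distinct coordinates not summing to $0$ and hyperplanes $H\subset\mathbb{R}^{n+1}$ through the origin).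
   Context: The symmetric group $S_n$ acts on $\mathbb{R}^n$ by permuting coordinates; $S_nv$ denotes the orbit of $v$. *)

From HB Require Import structures.
From mathcomp Require Import all_boot all_order all_algebra all_fingroup.
From mathcomp Require Import reals.
Set Implicit Arguments. Unset Strict Implicit. Unset Printing Implicit Defensive.
Import Order.TTheory GRing.Theory Num.Theory.
Local Open Scope ring_scope.

Definition permv (R : realType) (n : nat) (s : 'S_n) (v : 'rV[R]_n) : 'rV[R]_n :=
  \row_i v ord0 (s i).

Definition admissible (R : realType) (n : nat) (v : 'rV[R]_n) : Prop :=
  injective (fun i : 'I_n => v ord0 i) /\ \sum_(i < n) v ord0 i != 0.

Definition inH (R : realType) (n : nat) (a : 'rV[R]_n) (x : 'rV[R]_n) : bool :=
  \sum_(i < n) a ord0 i * x ord0 i == 0.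

Definition orbit_pts (R : realType) (n : nat) (v : 'rV[R]_n) : seq 'rV[R]_n :=
  undup [seq permv s v | s : 'S_n].

Definition hcount (R : realType) (n : nat) (a v : 'rV[R]_n) : nat :=
  size [seq x <- orbit_pts v | inH a x].

(* For all admissible v and all hyperplanes H through 0 of R^n: |H ∩ S_n v| <= n!/k
   (stated multiplicatively in nat: k * |H ∩ S_n v| <= n!). *)
Definition bound_k (R : realType) (n k : nat) : Prop :=
  forall (v a : 'rV[R]_n), admissible v -> a != 0 -> (k * hcount a v <= n`!)%N.

Definition max_is (R : realType) (n M : nat) : Prop :=
  (forall (v a : 'rV[R]_n), admissible v -> a != 0 -> (hcount a v <= M)%N) /\
  (exists (v a : 'rV[R]_n), [/\ admissible v, a != 0 & hcount a v = M]).

From HB Require Import structures.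
From mathcomp Require Import all_boot all_order all_algebra all_fingroup.
From mathcomp Require Import reals ring zify.
Set Implicit Arguments. Unset Strict Implicit. Unset Printing Implicit Defensive.
Import Order.TTheory GRing.Theory Num.Theory.
Local Open Scope ring_scope.

(* Given v in R^(m+1) and a normal a, pick a
   coordinate j with sum_(l <> j) v_l <> 0 and sort the permutations s by
   i = s^-1 j. On each class the condition s.v in H is a hyperplane condition
   on the other m coordinates of v, with some normal b_i. If every b_i is
   nonzero, induction gives at most (m+1) * m!/k hits. If some b_i vanishes,
   a is constant off coordinate i, and then all hits share the value of s i,
   which leaves at most m! <= (m+1)!/k of them because k <= m+1.
   For odd n, the bound k = n in dimension n propagates to
   |H \cap S_(n+1) v| <= (n+1)(n-1)!, and v = (0,1,...,n) attains it for the
   hyperplane on which s.v lies iff s 0 + s 1 = n: as n is odd there are n+1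
   choices of (s 0, s 1), each completed by (n-1)! permutations. *)

Section LiftPerm.
Variable n : nat.
Implicit Types (i j : 'I_n.+1) (s : 'S_n.+1) (t : 'S_n).

Definition unlift_perm_fun i s k := odflt k (unlift (s i) (s (lift i k))).

Lemma lift_unlift_perm_fun i s k :
  lift (s i) (unlift_perm_fun i s k) = s (lift i k).
Proof.
rewrite /unlift_perm_fun; have := neq_lift i k.
by rewrite -(can_eq (permK s)) => /unlift_some[k' -> ->].
Qed.

Lemma unlift_perm_fun_inj i s : injective (unlift_perm_fun i s).
Proof.
move=> k k' /(congr1 (lift (s i))).
by rewrite !lift_unlift_perm_fun => /perm_inj/lift_inj.
Qed.

Definition unlift_perm i s : 'S_n := perm (@unlift_perm_fun_inj i s).

Lemma lift_unlift_perm i s : lift_perm i (s i) (unlift_perm i s) = s.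
Proof.
apply/permP => k; case: (unliftP i k) => [k'|] ->; last by rewrite lift_perm_id.
by rewrite lift_perm_lift permE lift_unlift_perm_fun.
Qed.

Lemma card_lift_perm i j (P : pred 'S_n.+1) :
  #|[set s : 'S_n.+1 | (s i == j) && P s]| =
    #|[set t : 'S_n | P (lift_perm i j t)]|.
Proof.
have lift_perm_inj : injective (lift_perm i j).
  move=> t t' e; apply/permP => k.
  by apply: (@lift_inj _ j); rewrite -!(lift_perm_lift i) e.
rewrite -(card_imset _ lift_perm_inj); apply: eq_card => s; rewrite !inE.
apply/andP/imsetP => [[/eqP <- Ps] | [t]]; last first.
  by rewrite inE => Pt ->; rewrite lift_perm_id.
by exists (unlift_perm i s); rewrite ?inE lift_unlift_perm.
Qed.

Lemma card_perm_fix i j : #|[set s : 'S_n.+1 | s i == j]| = n`!.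
Proof.
rewrite -card_Sn -cardsT; have := card_lift_perm i j predT.
by move=> e; apply: etrans e; apply: eq_card => s; rewrite !inE andbT.
Qed.

Lemma card_perm_partition i (P : pred 'S_n.+1) :
  #|[set s : 'S_n.+1 | P s]| = (\sum_j #|[set t : 'S_n | P (lift_perm i j t)]|)%N.
Proof.
rewrite -sum1_card (partition_big (fun s => s i) predT) //=.
apply: eq_bigr => j _; rewrite -card_lift_perm -sum1_card.
by apply: eq_bigl => s; rewrite !inE andbC.
Qed.

Lemma card_perm_partitionV j (P : pred 'S_n.+1) :
  #|[set s : 'S_n.+1 | P s]| = (\sum_i #|[set t : 'S_n | P (lift_perm i j t)]|)%N.
Proof.
rewrite -sum1_card (partition_big (fun s => (s^-1)%g j) predT) //=.
apply: eq_bigr => i _; rewrite -card_lift_perm -sum1_card.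
apply: eq_bigl => s; rewrite !inE andbC; congr (_ && _).
by rewrite -(inj_eq (@perm_inj _ s)) permKV eq_sym.
Qed.

End LiftPerm.

Lemma rev_ord_neq n (j : 'I_n) : ~~ odd n -> rev_ord j != j.
Proof.
move=> n_even; apply/eqP => /(congr1 val) /= e; move: n_even.
have -> : n = (j.*2).+1 by have := ltn_ord j; rewrite -addnn; lia.
by rewrite /= odd_double.
Qed.

Lemma card_perm_pair n (i i' : 'I_n.+2) (f : 'I_n.+2 -> 'I_n.+2) :
  i != i' -> (forall j, f j != j) ->
  #|[set s : 'S_n.+2 | s i' == f (s i)]| = (n.+2 * n`!)%N.
Proof.
case: (unliftP i i') => [k ->|->]; last by rewrite eqxx.
move=> _ f_neq; rewrite (card_perm_partition i) (eq_bigr (fun=> n`!)).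
  by rewrite sum_nat_const card_ord.
move=> j _; have [y fj] : exists y, f j = lift j y.
  by case: (unliftP j (f j)) (f_neq j) => [y ->|->]; [exists y | rewrite eqxx].
rewrite -(card_perm_fix k y); apply: eq_card => t.
by rewrite !inE lift_perm_lift lift_perm_id fj (inj_eq (@lift_inj _ j)).
Qed.

Lemma sum_ord_mul2 n : ((\sum_(i < n) i) * 2 = n * n.-1)%N.
Proof.
elim: n => [|n IH]; first by rewrite big_ord0.
by rewrite big_ord_recr /= mulnDl IH; case: n {IH} => //= n; lia.
Qed.

Definition hits (R : realType) n (a v : 'rV[R]_n) : {set 'S_n} :=
  [set s | inH a (permv s v)].

Lemma permv_inj (R : realType) n (v : 'rV[R]_n) :
  injective (fun i => v ord0 i) -> injective (fun s : 'S_n => permv s v).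
Proof.
move=> vinj s s' /rowP e; apply/permP => i.
by apply: vinj; have := e i; rewrite !mxE.
Qed.

Lemma hcountE (R : realType) n (a v : 'rV[R]_n) :
  injective (fun i => v ord0 i) -> hcount a v = #|hits a v|.
Proof.
move=> vinj; rewrite /hcount /orbit_pts undup_id; last first.
  by rewrite map_inj_uniq ?enum_uniq //; apply: permv_inj.
rewrite size_filter count_map cardE /enum_mem size_filter count_filter.
by apply: eq_count => s; rewrite /= !inE andbT.
Qed.

Section FiberReduction.
Variables (R : realType) (n : nat).

Lemma sum_permv (s : 'S_n) (v : 'rV[R]_n) :
  \sum_l permv s v ord0 l = \sum_l v ord0 l.
Proof.
rewrite [RHS](reindex_inj (@perm_inj _ s)).
by apply: eq_bigr => l _; rewrite mxE.
Qed.

Lemma sum_col' (v : 'rV[R]_n.+1) j :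
  \sum_l col' j v ord0 l = \sum_l v ord0 l - v ord0 j.
Proof.
rewrite [X in _ = X - _](bigD1_ord j) //= addrC addrK.
by apply: eq_bigr => l _; rewrite mxE.
Qed.

(* The fixed term a_i v_j is spread evenly over the remaining coordinates of
   v, whose sum does not depend on how they are permuted. *)
Definition fiber_normal (a v : 'rV[R]_n.+1) i j : 'rV[R]_n :=
  col' i a + const_mx (a ord0 i * v ord0 j / \sum_l col' j v ord0 l).

Lemma inH_lift_perm (a v : 'rV[R]_n.+1) i j (t : 'S_n) :
  \sum_l col' j v ord0 l != 0 ->
  inH a (permv (lift_perm i j t) v) =
    inH (fiber_normal a v i j) (permv t (col' j v)).
Proof.
move=> Sj; rewrite /inH (bigD1_ord i) //= !mxE lift_perm_id.
under eq_bigr do rewrite !mxE lift_perm_lift.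
under [in RHS]eq_bigr do rewrite !mxE mulrDl.
rewrite big_split /= addrC -mulr_sumr.
have -> : \sum_l v ord0 (lift j (t l)) = \sum_l col' j v ord0 l.
  by rewrite -(sum_permv t); apply: eq_bigr => l _; rewrite !mxE.
by rewrite divfK.
Qed.

Lemma card_hits_split (a v : 'rV[R]_n.+1) j :
  \sum_l col' j v ord0 l != 0 ->
  #|hits a v| = (\sum_i #|hits (fiber_normal a v i j) (col' j v)|)%N.
Proof.
move=> Sj; rewrite (card_perm_partitionV j); apply: eq_bigr => i _.
by apply: eq_card => t; rewrite !inE inH_lift_perm.
Qed.

End FiberReduction.

Section Step.
Variable R : realType.

Lemma dot_permv_const_off n (a v : 'rV[R]_n.+1) i d (s : 'S_n.+1) :
  col' i a = const_mx d ->
  \sum_l a ord0 l * permv s v ord0 l =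
    (a ord0 i - d) * v ord0 (s i) + d * \sum_l v ord0 l.
Proof.
move=> /rowP ad; rewrite -(sum_permv s v) !(bigD1_ord i) //= mulrDr mulr_sumr.
rewrite (eq_bigr (fun l => d * permv s v ord0 (lift i l))); last first.
  by move=> l _; have := ad l; rewrite !mxE => ->.
rewrite mxE; ring.
Qed.

Lemma card_hits_const_off n (a v : 'rV[R]_n.+1) i d :
  a != 0 -> admissible v -> col' i a = const_mx d -> (#|hits a v| <= n`!)%N.
Proof.
move=> a0 [vinj S0] ad.
have [->|[s0 hs0]] := set_0Vmem (hits a v); first by rewrite cards0.
rewrite -(card_perm_fix i (s0 i)); apply/subset_leq_card/subsetP => s.
move: hs0; rewrite !inE /inH !(dot_permv_const_off _ _ ad).
have [adi|adi] := eqVneq (a ord0 i) d.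
  rewrite adi subrr mul0r add0r mulf_eq0 (negbTE S0) orbF => /eqP d0.
  case/eqP: a0; apply/rowP => l; rewrite mxE.
  case: (unliftP i l) => [l'|] ->; last by rewrite adi.
  by move/rowP: ad => /(_ l'); rewrite !mxE => ->.
rewrite -subr_eq0 in adi.
move=> /eqP e0 /eqP e; apply/eqP/vinj/(mulfI adi)/(addIr (d * \sum_l v ord0 l)).
by rewrite e e0.
Qed.

Lemma admissible_col' n (v : 'rV[R]_n.+1) j :
  injective (fun l => v ord0 l) -> \sum_l col' j v ord0 l != 0 ->
  admissible (col' j v).
Proof. by move=> vinj Sj; split=> // l l'; rewrite !mxE => /vinj/lift_inj. Qed.

Lemma exists_col'_sum_neq0 n (v : 'rV[R]_n.+2) :
  injective (fun l => v ord0 l) -> exists j, \sum_l col' j v ord0 l != 0.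
Proof.
move=> vinj; have [e|ne] := eqVneq (v ord0 ord0) (\sum_l v ord0 l).
  exists (lift ord0 ord0); rewrite sum_col' subr_eq0 -e.
  by apply/eqP => /vinj/eqP; rewrite (negbTE (neq_lift _ _)).
by exists ord0; rewrite sum_col' subr_eq0 eq_sym.
Qed.

Lemma bound_k_step n k :
  (k <= n.+2)%N -> bound_k R n.+1 k -> bound_k R n.+2 k.
Proof.
move=> kn Hb v a [vinj S0] a0; rewrite hcountE //.
have [j Sj] := exists_col'_sum_neq0 vinj.
have [/forallP b_neq0 | /forallPn[i /negPn /eqP b_eq0]] :=
  boolP [forall i, fiber_normal a v i j != 0].
  rewrite (card_hits_split _ Sj) big_distrr factS.
  apply: (@leq_trans (\sum_(i < n.+2) n.+1`!)); last first.
    by rewrite sum_nat_const card_ord.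
  apply: leq_sum => i _.
  have adm := admissible_col' vinj Sj; rewrite -hcountE; last by case: adm.
  exact: Hb.
have ad :
    col' i a = const_mx (- (a ord0 i * v ord0 j / \sum_l col' j v ord0 l)).
  apply/rowP => l; move/rowP: b_eq0 => /(_ l); rewrite !mxE.
  by move/eqP; rewrite addr_eq0 => /eqP.
rewrite factS; apply: leq_mul => //.
exact: card_hits_const_off a0 (conj vinj S0) ad.
Qed.

Lemma bound_k_mono n m k :
  (k <= n)%N -> (n <= m)%N -> bound_k R n k -> bound_k R m k.
Proof.
case: n => [|n]; first by rewrite leqn0 => /eqP -> _ _ v a _ _; rewrite mul0n.
move=> kn /subnK <-; elim: (m - n.+1)%N => [|d IH] // Hb.
rewrite addSn addnS; apply: bound_k_step; first by lia.
by rewrite -addnS; exact: IH.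
Qed.

End Step.

Section Example.
Variable R : realType.

Definition ramp n : 'rV[R]_n := \row_i i%:R.

(* pair_normal n . (s ramp) = (n+2) (s 0 + s 1 - (n+1)) *)
Definition pair_normal n : 'rV[R]_n.+2 :=
  \row_i (((i < 2)%N : nat)%:R * n.+2%:R - 2).

Lemma admissible_ramp n : admissible (ramp n.+2).
Proof.
split=> [i j | ]; first by rewrite !mxE => /eqP; rewrite eqr_nat => /eqP /val_inj.
rewrite psumr_eq0 => [|i _]; last by rewrite mxE.
apply/allP => /(_ (lift ord0 ord0)).
by rewrite mem_index_enum mxE pnatr_eq0 => /(_ isT).
Qed.

Lemma pair_normal_neq0 n : pair_normal n.+1 != 0.
Proof.
apply/eqP => /rowP /(_ ord_max); rewrite !mxE /= mul0r sub0r => /eqP.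
by rewrite oppr_eq0 pnatr_eq0.
Qed.

Lemma inH_pair_normal n (s : 'S_n.+2) :
  inH (pair_normal n) (permv s (ramp n.+2)) =
    (s ord0 + s (lift ord0 ord0) == n.+1)%N.
Proof.
rewrite /inH; under eq_bigr do rewrite !mxE mulrBl.
rewrite sumrB -mulr_sumr.
rewrite [X in _ - 2 * X](_ : _ = \sum_(i < n.+2) (i : nat)%:R); last first.
  by rewrite [RHS](reindex_inj (@perm_inj _ s)).
rewrite -natr_sum -natrM mulnC sum_ord_mul2 /=.
rewrite 2!big_ord_recl big1 => [|i _]; last by rewrite /= mulr0n !mul0r.
rewrite /= !mul1r addr0 -mulrDr -natrD -natrM subr_eq0 eqr_nat.
by rewrite eqn_pmul2l.
Qed.

Lemma card_hits_pair_normal n :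
  ~~ odd n -> #|hits (pair_normal n) (ramp n.+2)| = (n.+2 * n`!)%N.
Proof.
move=> n_even.
rewrite -(@card_perm_pair _ ord0 (lift ord0 ord0) (@rev_ord _)) //.
  apply: eq_card => s; rewrite !inE inH_pair_normal -val_eqE /=.
  by apply/eqP/eqP; have := ltn_ord (s ord0); lia.
by move=> j; apply: rev_ord_neq; rewrite /= negbK.
Qed.

End Example.

Lemma bound_k_of_max (R : realType) n :
  max_is R n.+1 n`! -> bound_k R n.+1 n.+1.
Proof. by move=> [Hmax _] v a av a0; rewrite factS leq_mul2l Hmax ?orbT. Qed.

Theorem proposition1p7 (R : realType) :
  (forall k n : nat, (0 < k)%N -> (k <= n)%N ->
     bound_k R n k -> forall m : nat, (n <= m)%N -> bound_k R m k) /\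
  (forall n : nat, (3 <= n)%N -> odd n ->
     max_is R n (n.-1)`! -> max_is R n.+1 (n.+1 * (n.-1)`!)%N).
Proof.
split=> [k n _ kn Hb m nm | [|[|n]] // _ /= n_odd Hmax].
  exact: bound_k_mono kn nm Hb.
have Hb := bound_k_step (leqnSn _) (bound_k_of_max Hmax).
split=> [v a av a0 | ].
  by have := Hb v a av a0; rewrite (factS n.+2) (factS n.+1) mulnCA leq_pmul2l.
exists (ramp R n.+3), (pair_normal R n.+1); split.
- exact: admissible_ramp.
- exact: pair_normal_neq0.
- by rewrite hcountE ?card_hits_pair_normal //; case: (admissible_ramp R n.+1).
Qed.
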